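(* Let $M$ be a loopless matroid on $E=\{0,\dots,n\}$. The Bergman classes $\{\Delta_{M'} : M' \text{ a loopless relative nested quotient of } M\}$ are linearly independent in $\operatorname{MW}_\bullet(\Sigma_{A_n})$.
   Context: $\Sigma_{A_n}$ is the braid fan in $\mathbb R^E/\mathbb R\mathbf e_E$, with cones $\operatorname{Cone}(u_{S_1},\dots,u_{S_k})$ for chains of subsets $\emptyset\subsetneq S_1\subsetneq\cdots\subsetneq S_k\subsetneq E$, where $u_S$ is the image of $\sum_{i\in S}\mathbf e_i$; $\operatorname{MW}_\ell(\Sigma_{A_n})$ is the space of $\ell$-dimensional Minkowski weights (balanced real functions on $\ell$-dimensional cones) and $\operatorname{MW}_\bullet=\bigoplus_\ell\operatorname{MW}_\ell$. For a loopless matroid $M'$ of rank $r'$, $\Delta_{M'}\in\operatorname{MW}_{r'-1}(\Sigma_{A_n})$ equals $1$ on cones $\operatorname{Cone}(u_{F_1},\dots,u_{F_{r'-1}})$ with all $F_i$ flats of $M'$ and $0$ otherwise. $M'$ is a quotient of $M$ ($f:M'\twoheadleftarrow M$) if every flat of $M'$ is a flat of $M$; $n_f(A)=\operatorname{rk}_M(A)-\operatorname{rk}_{M'}(A)$; an $f$-cyclic flat is a flat $F$ of $M'$ minimal under inclusion among flats of $M'$ of the same $f$-nullity; $M'$ is a relative nested quotient if its $f$-cyclic flats form a chain. *)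

From mathcomp Require Import all_boot all_order all_algebra.
From mathcomp Require Import reals.
Set Implicit Arguments. Unset Strict Implicit. Unset Printing Implicit Defensive.
Import GRing.Theory Num.Theory.

Section Matroids.
Variable E : finType.

Definition rankfun := {ffun {set E} -> nat}.

Definition is_matroid (r : rankfun) : Prop :=
  [/\ forall A : {set E}, r A <= #|A|,
      forall A B : {set E}, A \subset B -> r A <= r B
    & forall A B : {set E}, r (A :|: B) + r (A :&: B) <= r A + r B].

Definition loopless (r : rankfun) : Prop := forall e : E, r [set e] = 1.

Definition is_flat (r : rankfun) (F : {set E}) : bool :=
  [forall x, (x \notin F) ==> (r F < r (x |: F))].

Definition is_quotient (r' r : rankfun) : Prop :=
  forall F : {set E}, is_flat r' F -> is_flat r F.

Definition fnullity (r r' : rankfun) (A : {set E}) : int :=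
  (r A)%:Z - (r' A)%:Z.

Definition is_fcyclic_flat (r r' : rankfun) (F : {set E}) : Prop :=
  is_flat r' F /\
  forall G : {set E}, is_flat r' G -> G \proper F ->
    fnullity r r' G <> fnullity r r' F.

Definition is_relative_nested (r r' : rankfun) : Prop :=
  forall F G : {set E}, is_fcyclic_flat r r' F -> is_fcyclic_flat r r' G ->
    F \subset G \/ G \subset F.

Definition loopless_relative_nested_quotient (r r' : rankfun) : Prop :=
  [/\ is_matroid r', loopless r', is_quotient r' r & is_relative_nested r r'].

(* Cones of the braid fan: chains of nonempty proper subsets of E;
   the cone Cone(u_S : S in C) has dimension #|C|. *)
Definition is_chain (C : {set {set E}}) : bool :=
  [forall S in C, (S != set0) && (S != setT)] &&
  [forall S in C, forall T in C, (S \subset T) || (T \subset S)].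

(* Bergman class Delta_{M'}, as a (graded) function on the cones of the braid
   fan: 1 on the (rk M' - 1)-dimensional cones spanned by flats of M', 0
   elsewhere. *)
Definition bergman (R : nzRingType) (r' : rankfun) (C : {set {set E}}) : R :=
  if (#|C| == (r' setT).-1) && [forall S in C, is_flat r' S] then 1%R else 0%R.

End Matroids.

From mathcomp Require Import all_boot all_order all_algebra.
From mathcomp Require Import reals zify.
Set Implicit Arguments. Unset Strict Implicit. Unset Printing Implicit Defensive.
Import GRing.Theory.

(* Weight a rank function by [\sum_A rk A].  For a loopless relative nested
   quotient M' of M, the nontrivial f-cyclic flats of M' form a chain of flats
   of M', which extends to a complete flag C of M', so that Delta_M'(C) = 1.
   If Delta_M''(C) <> 0 for another loopless quotient M'' of M, then C is a
   complete flag of M'' too, so rk_M'' and rk_M' agree on C and on E, hence on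
   every f-cyclic flat of M'.  Every flat F of M' contains an f-cyclic flat Z
   of the same f-nullity, and the f-nullity of M'' is monotone, which gives
   rk_M'' <= rk_M' everywhere: either M'' = M' or M'' has smaller weight.  The
   Bergman classes are thus triangular with respect to the weight. *)

Lemma coef_eq0_of_triangular (T : eqType) (K : Type) (R : nzRingType)
    (P : K -> Prop) (f : T -> K -> R) (w : T -> nat) (s : seq T) (c : T -> R) :
  uniq s ->
  (forall m, m \in s -> exists2 k, P k & f m k = 1%R /\
     forall x, x \in s -> x != m -> (f x k != 0)%R -> w x < w m) ->
  (forall k, P k -> \sum_(x <- s) c x * f x k = 0)%R ->
  forall x, x \in s -> c x = 0%R.
Proof.
move=> us tri sum0 x0 x0s; apply/eqP; apply: contraT => cx0.
set S := [seq x <- s | (c x != 0)%R].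
have exS : exists n, n \in map w S.
  by exists (w x0); apply: map_f; rewrite mem_filter cx0.
have [_ /mapP[m + ->] minw] := ex_minnP exS; rewrite mem_filter => /andP[cm ms].
have [k Pk [fm1 fx]] := tri m ms.
move: (sum0 k Pk); rewrite (bigD1_seq m) //= fm1 mulr1 big_seq_cond big1.
  by rewrite addr0 => /eqP; rewrite (negbTE cm).
move=> x /andP[xs xm]; have [->|cx] := eqVneq (c x) 0%R; first exact: mul0r.
have [->|fxk] := eqVneq (f x k) 0%R; first exact: mulr0.
have xS : x \in S by rewrite mem_filter cx.
by move: (minw _ (map_f w xS)); rewrite leqNgt fx.
Qed.


Section Matroid.
Variable E : finType.
Implicit Types (A B F G H S T X Y Z : {set E}) (x : E).

Lemma setU_ind (P : {set E} -> Prop) (A : {set E}) :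
  P A -> (forall (B : {set E}) x, A \subset B -> P B -> P (x |: B)) ->
  forall B : {set E}, A \subset B -> P B.
Proof.
move=> PA PS B /setUidPr <-; rewrite -[B]set_enum.
elim: (enum B) => [|x xs IH]; first by rewrite set_nil setU0.
by rewrite set_cons setUCA; apply: PS IH; apply: subsetUl.
Qed.

Definition cl (q : rankfun E) (A : {set E}) := [set x | q (x |: A) <= q A].

Lemma subset_cl (q : rankfun E) A : A \subset cl q A.
Proof. by apply/subsetP => x xA; rewrite inE (setUidPr _) // sub1set. Qed.

Section Rank.
Variable q : rankfun E.
Hypothesis hq : is_matroid q.

Lemma rank_le_card A : q A <= #|A|.
Proof. by case: hq. Qed.

Lemma rank_mono A B : A \subset B -> q A <= q B.
Proof. by case: hq => _ mono _; apply: mono. Qed.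

Lemma rank_submod A B : q (A :|: B) + q (A :&: B) <= q A + q B.
Proof. by case: hq. Qed.

Lemma rank0 : q set0 = 0.
Proof. by apply/eqP; rewrite -leqn0 -(cards0 E) rank_le_card. Qed.

Lemma rank_setU1 A x : q (x |: A) <= (q A).+1.
Proof.
have := rank_submod [set x] A; have := rank_le_card [set x]; rewrite cards1; lia.
Qed.

Lemma clS A B : A \subset B -> cl q A \subset cl q B.
Proof.
move=> AB; apply/subsetP => x; rewrite !inE => hx.
have := rank_submod (x |: A) B; rewrite -setUA (setUidPr AB).
have : q A <= q ((x |: A) :&: B) by rewrite rank_mono // subsetI AB subsetUr.
lia.
Qed.

Lemma rank_cl A : q (cl q A) = q A.
Proof.
suff: forall B, A \subset B -> B \subset cl q A -> q B = q A.
  by apply; rewrite ?subset_cl.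
apply: setU_ind => // B x AB IH; rewrite subUset sub1set => /andP[xA /IH qB].
have /subsetP/(_ x xA) := clS AB; rewrite inE.
have := rank_mono (subsetUr [set x] B); lia.
Qed.

Lemma cl_flat A : is_flat q (cl q A).
Proof.
apply/forall_inP => x xA; rewrite ltnNge; apply: contra xA; rewrite rank_cl => hx.
by rewrite inE (leq_trans _ hx) // rank_mono // setUS // subset_cl.
Qed.

Lemma cl_min A F : is_flat q F -> A \subset F -> cl q A \subset F.
Proof.
move=> /forall_inP fF AF; apply/subsetP => x xA; apply/negPn/negP => xF.
have /subsetP/(_ x xA) := clS AF; rewrite inE leqNgt.
by rewrite (fF x xF).
Qed.

Lemma flat_rank_lt F G : is_flat q F -> F \proper G -> q F < q G.
Proof.
move=> /forall_inP fF /properP[FG [x xG xF]].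
by apply: leq_trans (fF x xF) (rank_mono _); rewrite subUset sub1set xG.
Qed.

Lemma flat_subset_of_rank_le F G : is_flat q F -> is_flat q G ->
  (F \subset G) || (G \subset F) -> q F <= q G -> F \subset G.
Proof.
move=> fF fG /orP[//|GF]; apply: contraTT => FG.
by rewrite -ltnNge flat_rank_lt // properEneq GF andbT; apply: contraNneq FG => ->.
Qed.

Lemma exists_flat_cover F G : is_flat q F -> is_flat q G -> F \proper G ->
  exists H, [/\ is_flat q H, F \subset H, H \subset G & q H = (q F).+1].
Proof.
move=> fF fG /properP[FG [x xG xF]]; exists (cl q (x |: F)); split.
- exact: cl_flat.
- exact: subset_trans (subsetUr _ _) (subset_cl _ _).
- by apply: cl_min; rewrite ?subUset ?sub1set ?xG.
- move/forall_inP: fF => /(_ x xF); rewrite rank_cl; have := rank_setU1 F x; lia.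
Qed.

Lemma flatT : is_flat q setT.
Proof. by apply/forall_inP => x; rewrite inE. Qed.

Hypothesis hl : loopless q.

Lemma flat0 : is_flat q set0.
Proof. by apply/forall_inP => x _; rewrite setU0 hl rank0. Qed.

Lemma loopless_rank_gt0 A : A != set0 -> 0 < q A.
Proof. by case/set0Pn => x xA; rewrite -(hl x) rank_mono // sub1set. Qed.

End Rank.

Section Quotient.
Variables r r' : rankfun E.
Hypotheses (hr : is_matroid r) (hr' : is_matroid r') (hrr' : is_quotient r' r).

Lemma cl_quotient A : cl r A \subset cl r' A.
Proof. by apply: (cl_min hr); [apply: hrr'; apply: cl_flat | apply: subset_cl]. Qed.

Lemma fnullity_setU1 A x : (fnullity r r' A <= fnullity r r' (x |: A))%R.
Proof.
rewrite /fnullity; have := rank_mono hr (subsetUr [set x] A).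
have := rank_setU1 hr' A x; case: (leqP (r (x |: A)) (r A)) => [rx|]; last lia.
have /subsetP/(_ x) := cl_quotient A; rewrite !inE => /(_ rx); lia.
Qed.

Lemma fnullity_mono A B : A \subset B -> (fnullity r r' A <= fnullity r r' B)%R.
Proof.
by elim/setU_ind => // {}B x _ nB; apply: Order.le_trans nB (fnullity_setU1 _ _).
Qed.

End Quotient.

Definition fcyclic_flatb (r r' : rankfun E) F :=
  is_flat r' F && [forall G, is_flat r' G && (G \proper F) ==>
                              (fnullity r r' G != fnullity r r' F)].

Lemma fcyclic_flatP r r' F :
  reflect (is_fcyclic_flat r r' F) (fcyclic_flatb r r' F).
Proof.
apply: (iffP andP) => [[fF /forall_inP h]|[fF h]]; split=> //.
- by move=> G fG GF; apply/eqP; apply: h; rewrite fG.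
- by apply/forall_inP => G /andP[fG GF]; apply/eqP; apply: h.
Qed.

Lemma exists_fcyclic_flat_sub r r' F : is_flat r' F ->
  exists Z, [/\ is_fcyclic_flat r r' Z, Z \subset F
              & fnullity r r' Z = fnullity r r' F].
Proof.
move=> fF.
pose P := [pred G | [&& is_flat r' G, G \subset F
                      & fnullity r r' G == fnullity r r' F]].
have PF : P F by rewrite /= fF subxx eqxx.
have [Z /and3P[fZ ZF /eqP nZ] minZ] := arg_minnP (fun G => #|G|) PF.
exists Z; split=> //; split=> // G fG GZ nG.
have := minZ G; rewrite /= fG (subset_trans (proper_sub GZ) ZF) nG nZ eqxx.
by move=> /(_ isT); rewrite leqNgt proper_card.
Qed.

Lemma rank_le_of_fcyclic_eq (r m x : rankfun E) :
  is_matroid r -> is_matroid m -> is_matroid x -> is_quotient x r ->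
  (forall Z, is_fcyclic_flat r m Z -> x Z = m Z) -> forall A, x A <= m A.
Proof.
move=> hr hm hx hxr eqZ A.
have [Z [cZ ZF nZ]] := exists_fcyclic_flat_sub r (cl_flat hm A).
have := fnullity_mono hr hx hxr ZF; have := rank_mono hx (subset_cl m A).
by move: nZ; rewrite /fnullity (rank_cl hm) (eqZ Z cZ); lia.
Qed.

Section Flags.
Implicit Types C D K : {set {set E}}.

Lemma is_chainP C :
  reflect ({in C, forall S, (S != set0) && (S != setT)} /\
           {in C &, forall S T, (S \subset T) || (T \subset S)})
          (is_chain C).
Proof.
apply: (iffP andP) => [[/forall_inP ne /forall_inP tot]|[ne tot]]; split.
- exact: ne.
- by move=> S T SC; move/forall_inP: (tot S SC); apply.
- exact/forall_inP.
- by apply/forall_inP => S SC; apply/forall_inP => T TC; apply: tot.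
Qed.

Lemma chain_total C : is_chain C ->
  {in C &, forall S T, (S \subset T) || (T \subset S)}.
Proof. by case/is_chainP. Qed.

Lemma chain_set0_setT C : is_chain C ->
  {in set0 |: (setT |: C) &, forall S T, (S \subset T) || (T \subset S)}.
Proof.
move=> /chain_total tot S T; rewrite !inE.
move=> /or3P[/eqP->|/eqP->|SC] /or3P[/eqP->|/eqP->|TC];
  rewrite ?sub0set ?subsetT ?orbT //.
exact: tot.
Qed.

Variable q : rankfun E.
Hypotheses (hq : is_matroid q) (hl : loopless q).

Lemma chain_rank_range C : is_chain C -> {in C, forall S, is_flat q S} ->
  {in C, forall S, 0 < q S < q setT}.
Proof.
move=> /is_chainP[ne _] fl S SC; case/andP: (ne S SC) => S0 ST.
by rewrite (loopless_rank_gt0 hq hl) // (flat_rank_lt hq) ?fl ?properT.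
Qed.

Lemma card_flat_chain_window C K a b :
  is_chain C -> {in C, forall S, is_flat q S} -> K \subset C ->
  {in K, forall X, a <= q X < b} -> #|K| <= b - a.
Proof.
move=> /chain_total tot fl /subsetP KC win.
rewrite cardE -(size_map q) -(size_iota a (b - a)); apply: uniq_leq_size.
- rewrite map_inj_in_uniq ?enum_uniq // => X Y; rewrite !mem_enum => XK YK qXY.
  have [XC YC] := (KC X XK, KC Y YK).
  have le := flat_subset_of_rank_le hq (fl _ XC) (fl _ YC) (tot _ _ XC YC).
  have ge := flat_subset_of_rank_le hq (fl _ YC) (fl _ XC) (tot _ _ YC XC).
  by apply/eqP; rewrite eqEsubset le ?ge ?qXY.
- by move=> j /mapP[X]; rewrite mem_enum => /win + ->; rewrite mem_iota; lia.
Qed.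

Lemma flat_chain_card_le C : is_chain C -> {in C, forall S, is_flat q S} ->
  #|C| <= (q setT).-1.
Proof.
move=> hC fl; rewrite -subn1.
exact: card_flat_chain_window hC fl (subxx C) (chain_rank_range hC fl).
Qed.

Lemma full_flag_rank C Z : is_chain C -> {in C, forall S, is_flat q S} ->
  #|C| = (q setT).-1 -> Z \in C -> q Z = #|[set Y in C | Y \subset Z]|.
Proof.
move=> hC fl hcard ZC; have rng := chain_rank_range hC fl.
rewrite setIdE; set L : {set {set E}} := [set Y : {set E} | Y \subset Z].
have lo : #|C :&: L| <= (q Z).+1 - 1.
  apply: (card_flat_chain_window hC fl (subsetIl _ _)) => X.
  rewrite !inE => /andP[XC XZ]; have := rng X XC; have := rank_mono hq XZ; lia.
have hi : #|C :\: L| <= q setT - (q Z).+1.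
  apply: (card_flat_chain_window hC fl (subsetDl _ _)) => X.
  rewrite !inE => /andP[XZ XC]; have := rng X XC.
  have ZX : Z \proper X.
    have := chain_total hC XC ZC; rewrite (negbTE XZ) /= => ZX.
    by rewrite properEneq ZX andbT; apply: contraNneq XZ => ->.
  have := flat_rank_lt hq (fl Z ZC) ZX; lia.
move: (cardsID L C) (rng Z ZC) lo hi; rewrite hcard -subn1.
lia.
Qed.

Lemma flat_chain_gap C j : is_chain C -> {in C, forall S, is_flat q S} ->
  0 < j < q setT -> {in C, forall S, q S != j} ->
  exists2 H, H \notin C &
    is_chain (H |: C) /\ {in H |: C, forall S, is_flat q S}.
Proof.
(* F and G are the neighbours of the missing rank j in C extended by set0 and
   setT; a flat covering F inside G fits into the gap. *)
move=> hC fl hj noj; set K := set0 |: (setT |: C).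
have totK := chain_set0_setT hC.
have flK : {in K, forall S, is_flat q S}.
  move=> S; rewrite !inE => /or3P[/eqP->|/eqP->|/fl//].
  - exact: flat0 hq hl.
  - exact: flatT.
pose below := [pred S | (S \in K) && (q S < j)].
pose above := [pred S | (S \in K) && (j < q S)].
have below0 : below set0.
  by rewrite /below /= !inE eqxx (rank0 hq); case/andP: hj.
have aboveT : above setT by rewrite /above /= !inE eqxx orbT; case/andP: hj.
have [F /andP[FK qFj] maxF] := arg_maxnP q below0.
have [G /andP[GK qGj] minG] := arg_minnP q aboveT.
have subF S : S \in K -> q S < j -> S \subset F.
  move=> SK qSj; apply: (flat_subset_of_rank_le hq (flK _ SK) (flK _ FK)).
    exact: totK.
  by apply: maxF; rewrite /below /= SK.
have supG S : S \in K -> j < q S -> G \subset S.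
  move=> SK qSj; apply: (flat_subset_of_rank_le hq (flK _ GK) (flK _ SK)).
    exact: totK.
  by apply: minG; rewrite /above /= SK.
have FG : F \proper G.
  have FsG : F \subset G.
    apply: (flat_subset_of_rank_le hq (flK _ FK) (flK _ GK)); first exact: totK.
    by apply: ltnW; apply: ltn_trans qGj.
  rewrite properEneq FsG andbT; apply: contraTneq qFj => ->.
  by rewrite -leqNgt ltnW.
have [H [fH FH HG qH]] := exists_flat_cover hq (flK _ FK) (flK _ GK) FG.
have cmpH S : S \in C -> (S \subset H) || (H \subset S).
  move=> SC; have SK : S \in K by rewrite !inE SC !orbT.
  case: (ltngtP (q S) j) => [lt|gt|eq]; last by move: (noj S SC); rewrite eq eqxx.
  - by rewrite (subset_trans (subF S SK lt) FH).
  - by rewrite (subset_trans HG (supG S SK gt)) orbT.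
exists H; last split.
- apply/negP => HC; have HK : H \in K by rewrite !inE HC !orbT.
  have := noj H HC; have := maxF H; rewrite /below /= HK qH; lia.
- apply/is_chainP; split.
  + move=> S; rewrite in_setU1 => /orP[/eqP->|SC].
      by apply/andP; split; apply/eqP => HS; move: qH; rewrite HS ?(rank0 hq); lia.
    by case/is_chainP: hC => ne _; apply: ne.
  + move=> S T; rewrite !in_setU1 => /orP[/eqP->|SC] /orP[/eqP->|TC].
    * by rewrite subxx.
    * by rewrite orbC cmpH.
    * exact: cmpH.
    * exact: chain_total hC _ _ SC TC.
- by move=> S; rewrite in_setU1 => /orP[/eqP->|/fl].
Qed.

Lemma exists_full_flag D : is_chain D -> {in D, forall S, is_flat q S} ->
  exists C, [/\ D \subset C, is_chain C, {in C, forall S, is_flat q S}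
              & #|C| = (q setT).-1].
Proof.
move=> hD flD.
pose P := [pred C : {set {set E}} |
  [&& D \subset C, is_chain C & [forall S in C, is_flat q S]]].
have PD : P D by rewrite /= subxx hD; apply/forall_inP.
have [C /and3P[DC hC /forall_inP flC] maxC] := arg_maxnP (fun C => #|C|) PD.
exists C; split=> //; apply/eqP; rewrite eqn_leq flat_chain_card_le //=.
rewrite -[leqLHS](size_iota 1) cardE -(size_map q).
apply: uniq_leq_size (iota_uniq _ _) _ => j; rewrite mem_iota => hj.
case: (boolP [exists S in C, q S == j]).
  by case/exists_inP => S SC /eqP<-; apply: map_f; rewrite mem_enum.
move=> /exists_inPn noj.
have [|H HC [hHC flHC]] := flat_chain_gap hC flC _ noj; first lia.
have := maxC (H |: C); rewrite /= hHC (subset_trans DC (subsetUr _ _)) cardsU1 HC.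
by move=> /(_ (introT forall_inP flHC)); rewrite add1n ltnn.
Qed.

End Flags.

Lemma full_flags_agree (x m : rankfun E) C :
  is_matroid x -> loopless x -> is_matroid m -> loopless m -> is_chain C ->
  {in C, forall S, is_flat x S} -> {in C, forall S, is_flat m S} ->
  #|C| = (x setT).-1 -> #|C| = (m setT).-1 ->
  x setT = m setT /\ {in C, forall Z, x Z = m Z}.
Proof.
move=> hx hxl hm hml hC flx flm cx cm; split=> [|Z ZC].
  have [->|ne] := eqVneq (setT : {set E}) set0; first by rewrite (rank0 hx) (rank0 hm).
  rewrite -(prednK (loopless_rank_gt0 hx hxl ne)).
  by rewrite -(prednK (loopless_rank_gt0 hm hml ne)) -cx -cm.
by rewrite (full_flag_rank hx hxl hC flx cx ZC) (full_flag_rank hm hml hC flm cm ZC).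
Qed.

Lemma sum_rank_lt (x m : rankfun E) :
  (forall A, x A <= m A) -> x != m -> \sum_A x A < \sum_A m A.
Proof.
move=> le xm; rewrite (ltn_leqif (leqif_sum (fun A _ => leqif_eq (le A)))).
by apply: contra xm => /forallP eq; apply/eqP/ffunP => A; apply/eqP/eq.
Qed.

Section Bergman.
Variable R : nzRingType.
Implicit Types (q : rankfun E) (C : {set {set E}}).

Lemma bergman_neq0 q C : (bergman R q C != 0)%R ->
  #|C| = (q setT).-1 /\ {in C, forall S, is_flat q S}.
Proof.
rewrite /bergman; case: ifP => [/andP[/eqP cC /forall_inP flC] _ //|_].
by rewrite eqxx.
Qed.

Lemma bergman_full_flag q C : #|C| = (q setT).-1 ->
  {in C, forall S, is_flat q S} -> bergman R q C = 1%R.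
Proof. by move=> cC /forall_inP flC; rewrite /bergman cC eqxx flC. Qed.

Lemma bergman_triangular (r m : rankfun E) :
  is_matroid r -> loopless_relative_nested_quotient r m ->
  exists2 C, is_chain C & bergman R m C = 1%R /\
    forall x : rankfun E, is_matroid x -> loopless x -> is_quotient x r ->
      (bergman R x C != 0)%R -> forall A, x A <= m A.
Proof.
move=> hr [hm hml _ nested].
pose D := [set Z | [&& fcyclic_flatb r m Z, Z != set0 & Z != setT]].
have hD : is_chain D.
  apply/is_chainP; split=> [Z|Z Z']; rewrite !inE; first by case/and3P=> _ -> ->.
  move=> /and3P[/fcyclic_flatP cZ _ _] /and3P[/fcyclic_flatP cZ' _ _].
  by case: (nested _ _ cZ cZ') => ->; rewrite ?orbT.
have flD : {in D, forall S, is_flat m S}.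
  by move=> Z; rewrite inE => /and3P[/andP[]].
have [C [DC hC flC cardC]] := exists_full_flag hm hml hD flD.
exists C => //; split=> [|x hx hxl hxr /bergman_neq0[cardx flx]].
  exact: bergman_full_flag.
have [xT xC] := full_flags_agree hx hxl hm hml hC flx flC cardx cardC.
apply: (rank_le_of_fcyclic_eq hr hm hx hxr) => Z cZ.
have [->|Z0] := eqVneq Z set0; first by rewrite (rank0 hx) (rank0 hm).
have [->|ZT] := eqVneq Z setT; first exact: xT.
by apply: xC; apply: (subsetP DC); rewrite inE Z0 ZT !andbT; apply/fcyclic_flatP.
Qed.

End Bergman.

End Matroid.

Local Open Scope ring_scope.

Theorem proposition3p25 (R : realType) (n : nat) (r : rankfun 'I_n.+1) :
  is_matroid r -> loopless r ->
  forall (s : seq (rankfun 'I_n.+1)) (c : rankfun 'I_n.+1 -> R),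
    uniq s ->
    (forall r' : rankfun 'I_n.+1, r' \in s ->
        loopless_relative_nested_quotient r r') ->
    (forall C : {set {set 'I_n.+1}}, is_chain C ->
        \sum_(r' <- s) c r' * bergman R r' C = 0) ->
    forall r' : rankfun 'I_n.+1, r' \in s -> c r' = 0.
Proof.
move=> hr _ s c us hs hsum.
pose weight (x : rankfun 'I_n.+1) := (\sum_A x A)%N.
apply: (coef_eq0_of_triangular (f := bergman R) (w := weight)) us _ hsum.
move=> m ms; have [C hC [bm1 le]] := bergman_triangular R hr (hs m ms).
exists C => //; split=> // x xs xm bx.
have [hx hxl hxr _] := hs x xs.
exact: sum_rank_lt (le x hx hxl hxr bx) xm.
Qed.
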